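(* Let $L\ge2$, fix an input $x\in\mathbb R^{d_0}$, and consider the $L$-layer ReLU network with parameters $\bm\theta=(W_1,b_1,\dots,W_L,b_L)$, where $W_l\in\mathbb R^{d_l\times d_{l-1}}$, $b_l\in\mathbb R^{d_l}$ for $l<L$, and $W_L\in\mathbb R^{C\times d_{L-1}}$, $b_L\in\mathbb R^C$; define $a_0(x)=x$, $a_l(x)=\sigma(W_la_{l-1}(x)+b_l)$ for $l=1,\dots,L-1$, and $F_x(\bm\theta)=W_La_{L-1}(x)+b_L$. Define $Z_1^+=\sigma(W_1x+b_1)$, $Z_1^-=0$ and, for $l=1,\dots,L-2$, $p_{l+1}=\sigma(W_{l+1})Z_l^++\sigma(-W_{l+1})Z_l^-+b_{l+1}$, $Z_{l+1}^-=\sigma(W_{l+1})Z_l^-+\sigma(-W_{l+1})Z_l^+$, $Z_{l+1}^+=\max\{p_{l+1},Z_{l+1}^-\}$, and set $A(\bm\theta)=\sigma(W_L)Z_{L-1}^++\sigma(-W_L)Z_{L-1}^-+\sigma(b_L)$, $B(\bm\theta)=\sigma(W_L)Z_{L-1}^-+\sigma(-W_L)Z_{L-1}^++\sigma(-b_L)$. Then $F_x(\bm\theta)=A(\bm\theta)-B(\bm\theta)$ for all $\bm\theta$, and for every block $\theta_l=(W_l,b_l)$, $l\in\{1,\dots,L\}$, when all other blocks are held fixed, each coordinate of $A$ and of $B$ is nonnegative and convex as a function of $\theta_l$.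
   Context: $\sigma(t)=\max\{t,0\}$ is the ReLU, applied entrywise to vectors and matrices; $\max\{\cdot,\cdot\}$ of two vectors is taken coordinatewise. *)

From HB Require Import structures.
From mathcomp Require Import all_boot all_order all_algebra.
Set Implicit Arguments. Unset Strict Implicit. Unset Printing Implicit Defensive.
Import Order.TTheory GRing.Theory Num.Theory.
Local Open Scope ring_scope.

Section Net.
Variable R : realFieldType.

Definition relu (t : R) : R := Num.max t 0.
Definition relu_mx m n (A : 'M[R]_(m, n)) : 'M[R]_(m, n) := map_mx relu A.
Definition max_mx m n (A B : 'M[R]_(m, n)) : 'M[R]_(m, n) := map2_mx Num.max A B.

(* Layer widths d : nat -> nat (d 0 = input dim; for L = n.+2 layers the
   output dimension C is d n.+2).  Layer l (1-based) has weight W (l-1) :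
   'M_(d l, d (l-1)) and bias b (l-1) : 'cV_(d l) (0-based indexing). *)
Variable d : nat -> nat.
Definition weights := forall k : nat, 'M[R]_(d k.+1, d k).
Definition biases := forall k : nat, 'cV[R]_(d k.+1).

Variable x : 'cV[R]_(d 0).

Fixpoint act (W : weights) (b : biases) (k : nat) : 'cV[R]_(d k) :=
  match k with
  | 0 => x
  | k'.+1 => relu_mx (W k' *m act W b k' + b k')
  end.

Definition Fx (n : nat) (W : weights) (b : biases) : 'cV[R]_(d n.+2) :=
  W n.+1 *m act W b n.+1 + b n.+1.

(* Zpm W b k = (Z_{k+1}^+, Z_{k+1}^-) *)
Fixpoint Zpm (W : weights) (b : biases) (k : nat)
  : 'cV[R]_(d k.+1) * 'cV[R]_(d k.+1) :=
  match k with
  | 0 => (relu_mx (W 0%N *m x + b 0%N), 0)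
  | k'.+1 =>
      let zp := (Zpm W b k').1 in
      let zm := (Zpm W b k').2 in
      let p := relu_mx (W k'.+1) *m zp + relu_mx (- W k'.+1) *m zm + b k'.+1 in
      let zm' := relu_mx (W k'.+1) *m zm + relu_mx (- W k'.+1) *m zp in
      (max_mx p zm', zm')
  end.

Definition Apart (n : nat) (W : weights) (b : biases) : 'cV[R]_(d n.+2) :=
  relu_mx (W n.+1) *m (Zpm W b n).1 + relu_mx (- W n.+1) *m (Zpm W b n).2
  + relu_mx (b n.+1).

Definition Bpart (n : nat) (W : weights) (b : biases) : 'cV[R]_(d n.+2) :=
  relu_mx (W n.+1) *m (Zpm W b n).2 + relu_mx (- W n.+1) *m (Zpm W b n).1
  + relu_mx (- b n.+1).

End Net.

Definition combW (R : realFieldType) (d : nat -> nat) (t : R)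
  (W W' : weights R d) : weights R d := fun k => t *: W k + (1 - t) *: W' k.
Definition combb (R : realFieldType) (d : nat -> nat) (t : R)
  (b b' : biases R d) : biases R d := fun k => t *: b k + (1 - t) *: b' k.

From mathcomp Require Import all_boot all_order all_algebra.
From mathcomp Require Import ring lra.
Set Implicit Arguments. Unset Strict Implicit. Unset Printing Implicit Defensive.
Import Order.TTheory GRing.Theory Num.Theory.
Local Open Scope ring_scope.

(* Writing W = relu W - relu (-W), propagate nonnegative vectors Z+ and Z-
   with Z+ - Z- = a_l(x); the identity relu (p - m) = max p m - m keeps this
   recursion free of subtractions, so A and B are built from nonnegative matrix
   products, sums and maxima.  When only the block theta_l varies, every such
   product has a fixed nonnegative factor: at layer l the weights vary while
   the inputs Z+, Z- are fixed, and above layer l the weights are fixed while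
   the inputs are already convex.  Sums, maxima and products with a fixed
   nonnegative factor preserve convexity. *)

Section Relu.
Variable R : realFieldType.

Lemma relu_ge0 (a : R) : 0 <= relu a.
Proof. by rewrite /relu le_max lexx orbT. Qed.

Lemma relu_subN (a : R) : relu a - relu (- a) = a.
Proof. by rewrite /relu /Order.max; case: ifP => ?; case: ifP => ?; lra. Qed.

Lemma max_subr (p m : R) : Num.max p m - m = relu (p - m).
Proof. by rewrite /relu /Order.max; case: ifP => ?; case: ifP => ?; lra. Qed.

Lemma relu_mx_nneg m n (A : 'M[R]_(m, n)) : relu_mx A \is a mxOver Num.nneg.
Proof. by apply/mxOverP => i j; rewrite mxE nnegrE relu_ge0. Qed.

Lemma relu_mx_subN m n (A : 'M[R]_(m, n)) : relu_mx A - relu_mx (- A) = A.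
Proof. by apply/matrixP => i j; rewrite !mxE relu_subN. Qed.

Lemma max_mx_subr m n (P M : 'M[R]_(m, n)) : max_mx P M - M = relu_mx (P - M).
Proof. by apply/matrixP => i j; rewrite !mxE max_subr. Qed.

Lemma max_mx_nneg m n (P M : 'M[R]_(m, n)) :
  M \is a mxOver Num.nneg -> max_mx P M \is a mxOver Num.nneg.
Proof.
move=> /mxOverP M_ge0; apply/mxOverP => i j.
by have := M_ge0 i j; rewrite mxE !nnegrE le_max => ->; rewrite orbT.
Qed.

End Relu.

Section SplitLayer.
Variable R : realFieldType.

Definition split_mul m n p (M : 'M[R]_(m, n)) (u v : 'M[R]_(n, p)) :=
  relu_mx M *m u + relu_mx (- M) *m v.

Definition Zpm_step m n (M : 'M[R]_(m, n)) (c : 'cV[R]_m)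
    (z : 'cV[R]_n * 'cV[R]_n) : 'cV[R]_m * 'cV[R]_m :=
  (max_mx (split_mul M z.1 z.2 + c) (split_mul M z.2 z.1), split_mul M z.2 z.1).

Lemma split_mul_nneg m n p (M : 'M[R]_(m, n)) (u v : 'M[R]_(n, p)) :
  u \is a mxOver Num.nneg -> v \is a mxOver Num.nneg ->
  split_mul M u v \is a mxOver Num.nneg.
Proof.
move=> u_ge0 v_ge0; apply/mxOverP => i j; rewrite mxE rpredD //.
  by apply: (mxOverP (mxOverM _ u_ge0)); apply: relu_mx_nneg.
by apply: (mxOverP (mxOverM _ v_ge0)); apply: relu_mx_nneg.
Qed.

Lemma split_mul_sub m n p (M : 'M[R]_(m, n)) (u v : 'M[R]_(n, p)) :
  split_mul M u v - split_mul M v u = M *m (u - v).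
Proof.
rewrite /split_mul -[in RHS](relu_mx_subN M) mulmxBl !mulmxBr.
move: (relu_mx M *m u) (relu_mx M *m v) (relu_mx (- M) *m u) (relu_mx (- M) *m v).
by move=> a1 a2 a3 a4; apply/matrixP => i j; rewrite !mxE; ring.
Qed.

Lemma Zpm_step_nneg m n (M : 'M[R]_(m, n)) c (z : 'cV[R]_n * 'cV[R]_n) :
  z.1 \is a mxOver Num.nneg -> z.2 \is a mxOver Num.nneg ->
  (Zpm_step M c z).1 \is a mxOver Num.nneg /\
  (Zpm_step M c z).2 \is a mxOver Num.nneg.
Proof.
move=> z1_ge0 z2_ge0; have z_ge0 := split_mul_nneg M z2_ge0 z1_ge0.
by split=> //; apply: max_mx_nneg.
Qed.

Lemma Zpm_step_sub m n (M : 'M[R]_(m, n)) c (z : 'cV[R]_n * 'cV[R]_n) :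
  (Zpm_step M c z).1 - (Zpm_step M c z).2 = relu_mx (M *m (z.1 - z.2) + c).
Proof. by rewrite max_mx_subr addrAC split_mul_sub. Qed.

End SplitLayer.

Section Convexity.
Variable R : realFieldType.
Variable t : R.
Hypotheses (t_ge0 : 0 <= t) (t_le1 : t <= 1).

Definition le_comb m n (At A A' : 'M[R]_(m, n)) :=
  forall i j, At i j <= t * A i j + (1 - t) * A' i j.

Lemma le_comb_refl m n (A : 'M[R]_(m, n)) : le_comb A A A.
Proof. by move=> i j; rewrite -mulrDl addrC subrK mul1r. Qed.

Lemma le_comb_lin m n (A A' : 'M[R]_(m, n)) :
  le_comb (t *: A + (1 - t) *: A') A A'.
Proof. by move=> i j; rewrite !mxE. Qed.

Lemma le_comb_add m n (At A A' Bt B B' : 'M[R]_(m, n)) :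
  le_comb At A A' -> le_comb Bt B B' -> le_comb (At + Bt) (A + B) (A' + B').
Proof. by move=> hA hB i j; rewrite !mxE; have := hA i j; have := hB i j; lra. Qed.

Lemma max_le_comb (at_ a a' bt b b' : R) :
  at_ <= t * a + (1 - t) * a' -> bt <= t * b + (1 - t) * b' ->
  Num.max at_ bt <= t * Num.max a b + (1 - t) * Num.max a' b'.
Proof.
have t'_ge0 : 0 <= 1 - t by rewrite subr_ge0.
have le_maxl (u v : R) : u <= Num.max u v by rewrite le_max lexx.
have le_maxr (u v : R) : v <= Num.max u v by rewrite le_max lexx orbT.
move=> ha hb; rewrite ge_max (le_trans ha) ?(le_trans hb) //;
  by rewrite lerD // ler_wpM2l.
Qed.

Lemma le_comb_max m n (At A A' Bt B B' : 'M[R]_(m, n)) :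
  le_comb At A A' -> le_comb Bt B B' ->
  le_comb (max_mx At Bt) (max_mx A B) (max_mx A' B').
Proof. by move=> hA hB i j; rewrite !mxE; apply: max_le_comb. Qed.

Lemma le_comb_relu m n (At A A' : 'M[R]_(m, n)) :
  le_comb At A A' -> le_comb (relu_mx At) (relu_mx A) (relu_mx A').
Proof.
move=> hA i j; rewrite !mxE; apply: max_le_comb => //.
by rewrite !mulr0 addr0.
Qed.

Lemma le_comb_reluN m n (A A' : 'M[R]_(m, n)) :
  le_comb (relu_mx (- (t *: A + (1 - t) *: A')))
          (relu_mx (- A)) (relu_mx (- A')).
Proof. by apply: le_comb_relu; rewrite opprD -!scalerN; apply: le_comb_lin. Qed.

Lemma le_comb_mulmxl m n p (Nt N N' : 'M[R]_(m, n)) (w : 'M[R]_(n, p)) :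
  w \is a mxOver Num.nneg -> le_comb Nt N N' ->
  le_comb (Nt *m w) (N *m w) (N' *m w).
Proof.
move=> /mxOverP w_ge0 hN i j; rewrite !mxE !mulr_sumr -big_split /=.
by apply: ler_sum => k _; have := hN i k; have := w_ge0 k j; rewrite nnegrE; nra.
Qed.

Lemma le_comb_mulmxr m n p (N : 'M[R]_(m, n)) (wt w w' : 'M[R]_(n, p)) :
  N \is a mxOver Num.nneg -> le_comb wt w w' ->
  le_comb (N *m wt) (N *m w) (N *m w').
Proof.
move=> /mxOverP N_ge0 hw i j; rewrite !mxE !mulr_sumr -big_split /=.
by apply: ler_sum => k _; have := hw k j; have := N_ge0 i k; rewrite nnegrE; nra.
Qed.

Lemma split_mul_comb_mx m n p (M M' : 'M[R]_(m, n)) (u v : 'M[R]_(n, p)) :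
  u \is a mxOver Num.nneg -> v \is a mxOver Num.nneg ->
  le_comb (split_mul (t *: M + (1 - t) *: M') u v)
          (split_mul M u v) (split_mul M' u v).
Proof.
move=> u_ge0 v_ge0; apply: le_comb_add; apply: le_comb_mulmxl => //.
  exact/le_comb_relu/le_comb_lin.
exact: le_comb_reluN.
Qed.

Lemma split_mul_comb_arg m n p (M : 'M[R]_(m, n))
    (ut u u' vt v v' : 'M[R]_(n, p)) :
  le_comb ut u u' -> le_comb vt v v' ->
  le_comb (split_mul M ut vt) (split_mul M u v) (split_mul M u' v').
Proof.
by move=> hu hv; apply: le_comb_add; apply: le_comb_mulmxr; rewrite ?relu_mx_nneg.
Qed.

Lemma le_comb_affine m n p (M M' : 'M[R]_(m, n)) (u : 'M[R]_(n, p)) c c' :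
  le_comb ((t *: M + (1 - t) *: M') *m u + (t *: c + (1 - t) *: c'))
          (M *m u + c) (M' *m u + c').
Proof.
rewrite mulmxDl -!scalemxAl addrACA -!scalerDr; exact: le_comb_lin.
Qed.

Lemma Zpm_step_comb_mx m n (M M' : 'M[R]_(m, n)) (c c' : 'cV[R]_m)
    (z : 'cV[R]_n * 'cV[R]_n) :
  z.1 \is a mxOver Num.nneg -> z.2 \is a mxOver Num.nneg ->
  let zt := Zpm_step (t *: M + (1 - t) *: M') (t *: c + (1 - t) *: c') z in
  le_comb zt.1 (Zpm_step M c z).1 (Zpm_step M' c' z).1 /\
  le_comb zt.2 (Zpm_step M c z).2 (Zpm_step M' c' z).2.
Proof.
move=> z1_ge0 z2_ge0 /=; have z_comb := split_mul_comb_mx M M' z2_ge0 z1_ge0.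
split=> //; apply: le_comb_max => //.
by apply: le_comb_add; [exact: split_mul_comb_mx | exact: le_comb_lin].
Qed.

Lemma Zpm_step_comb_arg m n (M : 'M[R]_(m, n)) (c : 'cV[R]_m)
    (zt z z' : 'cV[R]_n * 'cV[R]_n) :
  le_comb zt.1 z.1 z'.1 -> le_comb zt.2 z.2 z'.2 ->
  le_comb (Zpm_step M c zt).1 (Zpm_step M c z).1 (Zpm_step M c z').1 /\
  le_comb (Zpm_step M c zt).2 (Zpm_step M c z).2 (Zpm_step M c z').2.
Proof.
move=> z1_comb z2_comb /=; have z_comb := split_mul_comb_arg M z2_comb z1_comb.
split=> //; apply: le_comb_max => //.
by apply: le_comb_add; [exact: split_mul_comb_arg | exact: le_comb_refl].
Qed.

End Convexity.

Section Network.
Variables (R : realFieldType) (d : nat -> nat) (x : 'cV[R]_(d 0)).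
Implicit Types (W V : weights R d) (b c : biases R d).

Lemma ZpmS W b l : Zpm x W b l.+1 = Zpm_step (W l.+1) (b l.+1) (Zpm x W b l).
Proof. by []. Qed.

Lemma Apart_split n W b :
  Apart x n W b =
  split_mul (W n.+1) (Zpm x W b n).1 (Zpm x W b n).2 + relu_mx (b n.+1).
Proof. by []. Qed.

Lemma Bpart_split n W b :
  Bpart x n W b =
  split_mul (W n.+1) (Zpm x W b n).2 (Zpm x W b n).1 + relu_mx (- b n.+1).
Proof. by []. Qed.

Lemma Zpm_nneg W b l :
  (Zpm x W b l).1 \is a mxOver Num.nneg /\ (Zpm x W b l).2 \is a mxOver Num.nneg.
Proof.
elim: l => [|l [zp_ge0 zm_ge0]]; last by rewrite ZpmS; apply: Zpm_step_nneg.
by split; [apply: relu_mx_nneg | apply/mxOverP => i j; rewrite mxE nnegrE].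
Qed.

Lemma Zpm_sub W b l : (Zpm x W b l).1 - (Zpm x W b l).2 = act x W b l.+1.
Proof.
elim: l => [|l IH]; first by rewrite /= subr0.
by rewrite ZpmS Zpm_step_sub IH.
Qed.

Lemma Fx_Apart_Bpart n W b : Fx x n W b = Apart x n W b - Bpart x n W b.
Proof.
by rewrite Apart_split Bpart_split opprD addrACA split_mul_sub relu_mx_subN Zpm_sub.
Qed.

Lemma Apart_Bpart_nneg n W b :
  Apart x n W b \is a mxOver Num.nneg /\ Bpart x n W b \is a mxOver Num.nneg.
Proof.
have [zp_ge0 zm_ge0] := Zpm_nneg W b n.
rewrite Apart_split Bpart_split; split; apply/mxOverP => i j; rewrite mxE rpredD //.
- exact: (mxOverP (split_mul_nneg _ zp_ge0 zm_ge0)).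
- exact: (mxOverP (relu_mx_nneg _)).
- exact: (mxOverP (split_mul_nneg _ zm_ge0 zp_ge0)).
- exact: (mxOverP (relu_mx_nneg _)).
Qed.

Lemma Zpm_ext W b V c l :
  (forall j, (j <= l)%N -> W j = V j /\ b j = c j) -> Zpm x W b l = Zpm x V c l.
Proof.
elim: l => [|l IH] eqWV; first by have [/= -> ->] := eqWV 0%N isT.
rewrite !ZpmS IH => [|j le_jl]; last exact/eqWV/ltnW.
by have [-> ->] := eqWV l.+1 (leqnn _).
Qed.

End Network.

Section BlockConvexity.
Variables (R : realFieldType) (d : nat -> nat) (x : 'cV[R]_(d 0)) (n k : nat).
Variables (W W' : weights R d) (b b' : biases R d) (t : R).
Hypothesis lt_k_layers : (k < n.+2)%N.
Hypothesis other_blocks_fixed :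
  forall j : nat, (j < n.+2)%N -> j != k -> W j = W' j /\ b j = b' j.
Hypotheses (t_ge0 : 0 <= t) (t_le1 : t <= 1).

Local Notation Wt := (combW t W W').
Local Notation bt := (combb t b b').

Lemma comb_fixed j : (j < n.+2)%N -> j != k ->
  [/\ W' j = W j, Wt j = W j, b' j = b j & bt j = b j].
Proof.
move=> lt_j ne_jk; have [eqW eqb] := other_blocks_fixed lt_j ne_jk.
by rewrite /combW /combb -eqW -eqb -!scalerDl addrC subrK !scale1r.
Qed.

Lemma Zpm_agree l : (l < k)%N ->
  Zpm x W' b' l = Zpm x W b l /\ Zpm x Wt bt l = Zpm x W b l.
Proof.
move=> lt_lk.
have fixed_below j : (j <= l)%N ->
    [/\ W' j = W j, Wt j = W j, b' j = b j & bt j = b j].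
  move=> le_jl; have lt_jk := leq_ltn_trans le_jl lt_lk.
  by apply: comb_fixed; [exact: ltn_trans lt_k_layers | rewrite ltn_eqF].
by split; apply: Zpm_ext => j /fixed_below[eW eWt eb ebt].
Qed.

Lemma Zpm_comb l : (l < n.+2)%N ->
  le_comb t (Zpm x Wt bt l).1 (Zpm x W b l).1 (Zpm x W' b' l).1 /\
  le_comb t (Zpm x Wt bt l).2 (Zpm x W b l).2 (Zpm x W' b' l).2.
Proof.
elim: l => [|l IH] lt_l.
  by split; [apply/le_comb_relu/le_comb_affine | apply: le_comb_refl].
case: (ltngtP l.+1 k) => [lt_lk | lt_kl | eq_lk].
- by have [-> ->] := Zpm_agree lt_lk; split; apply: le_comb_refl.
- have [eW eWt eb ebt] := comb_fixed lt_l (negbT (gtn_eqF lt_kl)).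
  have [z1_comb z2_comb] := IH (ltnW lt_l).
  by rewrite !ZpmS eW eWt eb ebt; apply: Zpm_step_comb_arg.
- have lt_l_k : (l < k)%N by rewrite -eq_lk.
  have [zp_ge0 zm_ge0] := Zpm_nneg x W b l.
  rewrite !ZpmS; have [-> ->] := Zpm_agree lt_l_k.
  exact: Zpm_step_comb_mx.
Qed.

Lemma Apart_Bpart_comb :
  le_comb t (Apart x n Wt bt) (Apart x n W b) (Apart x n W' b') /\
  le_comb t (Bpart x n Wt bt) (Bpart x n W b) (Bpart x n W' b').
Proof.
rewrite !Apart_split !Bpart_split.
case: (ltngtP k n.+1) => [lt_kn | gt_kn | eq_kn].
- have [eW eWt eb ebt] := comb_fixed (ltnSn _) (negbT (gtn_eqF lt_kn)).
  have [zp_comb zm_comb] := Zpm_comb (ltnW (ltnSn _)).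
  rewrite eW eWt eb ebt.
  by split; apply: le_comb_add; try apply: le_comb_refl; apply: split_mul_comb_arg.
- by move: lt_k_layers; rewrite ltnS leqNgt gt_kn.
- have [zp_ge0 zm_ge0] := Zpm_nneg x W b n.
  have lt_nk : (n < k)%N by rewrite eq_kn.
  have [-> ->] := Zpm_agree lt_nk.
  split; apply: le_comb_add; try exact: split_mul_comb_mx.
    exact/le_comb_relu/le_comb_lin.
  exact: le_comb_reluN.
Qed.

End BlockConvexity.

(* L = n.+2 layers; block theta_l = (W (l-1), b (l-1)) is indexed by k = l-1 < n.+2 *)
Theorem theorem3p3 (R : realFieldType) (n : nat) (d : nat -> nat)
  (x : 'cV[R]_(d 0)) :
  (forall (W : weights R d) (b : biases R d),
      Fx x n W b = Apart x n W b - Bpart x n W b) /\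
  (forall k : nat, (k < n.+2)%N ->
    forall (W W' : weights R d) (b b' : biases R d),
      (forall j : nat, (j < n.+2)%N -> j != k -> W j = W' j /\ b j = b' j) ->
      forall (t : R), 0 <= t <= 1 ->
      forall i : 'I_(d n.+2),
        (0 <= Apart x n W b i 0 /\ 0 <= Bpart x n W b i 0) /\
        Apart x n (combW t W W') (combb t b b') i 0
          <= t * Apart x n W b i 0 + (1 - t) * Apart x n W' b' i 0 /\
        Bpart x n (combW t W W') (combb t b b') i 0
          <= t * Bpart x n W b i 0 + (1 - t) * Bpart x n W' b' i 0).
Proof.
split; first exact: Fx_Apart_Bpart.
move=> k lt_k W W' b b' fixed t /andP[t_ge0 t_le1] i.
have [/mxOverP A_ge0 /mxOverP B_ge0] := Apart_Bpart_nneg x n W b.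
have [A_comb B_comb] := Apart_Bpart_comb x lt_k fixed t_ge0 t_le1.
by split; [rewrite -!nnegrE | split].
Qed.
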